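(* Let $X$ be a non-empty finite set and $\mathcal{P}=\{P_1,\ldots,P_n\}$ a partition of $X$ indexed so that $|P_i|\le|P_{i+1}|$, with distinct block sizes $l_1<\cdots<l_r$. If $f\in\Sigma(X,\mathcal{P})$ and there is a companion of $\overline{f}$ in the subsemigroup generated by $S(X,\mathcal{P})\cup\mathcal{B}$, then $f$ lies in the subsemigroup generated by $S(X,\mathcal{P})\cup\mathcal{B}\cup\mathcal{C}$.
   Context: Maps are written on the right and composed left to right. $T(X,\mathcal{P})$ is the semigroup of maps $f:X\to X$ mapping each block of $\mathcal{P}$ into some block; $S(X,\mathcal{P})$ is its group of units; $\Sigma(X,\mathcal{P})$ is the set of $f\in T(X,\mathcal{P})$ whose image intersects every block. For $f\in T(X,\mathcal{P})$, $\overline{f}$ is the map on $\{1,\ldots,n\}$ with $(i)\overline{f}=j$ whenever $P_if\subseteq P_j$ (for $f\in\Sigma(X,\mathcal{P})$ this is a permutation). For $i\le r-1$, $\mathcal{B}_i$ is the set of $f\in\Sigma(X,\mathcal{P})$ for which there are blocks $P_j,P_{j'},P_k,P_{k'}$ (possibly $j=j'$ or $k=k'$) with $|P_j|=|P_{j'}|=l_i$, $|P_k|=|P_{k'}|=l_{i+1}$, such that $f$ maps $P_j$ injectively into $P_k$, maps $P_{k'}$ onto $P_{j'}$, and maps every other block bijectively onto a block of the same size; $\mathcal{B}=\bigcup_{i=1}^{r-1}\mathcal{B}_i$. For $i\le r$, $\mathcal{C}_i$ is the set of $f\in\Sigma(X,\mathcal{P})$ mapping each block into a block of the same size, such that one block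 of size $l_i$ has image of size $l_i-1$ and all other blocks are mapped injectively; $\mathcal{C}=\bigcup_{i=1}^r\mathcal{C}_i$. For a permutation $\pi$ of $\{1,\ldots,n\}$, a companion of $\pi$ is a $g\in\Sigma(X,\mathcal{P})$ with $\overline{g}=\pi$ such that $g|_{P_i}:P_i\to P_{(i)\pi}$ is injective whenever $|P_i|\le|P_{(i)\pi}|$ and surjective whenever $|P_i|\ge|P_{(i)\pi}|$. *)

From HB Require Import structures.
From mathcomp Require Import all_boot all_order all_fingroup.
Set Implicit Arguments. Unset Strict Implicit. Unset Printing Implicit Defensive.

Section Defs.
Variables (X : finType) (n : nat) (P : 'I_n -> {set X}).

Definition is_partition : Prop :=
  [/\ forall i, P i != set0,
      forall i j, i != j -> [disjoint P i & P j] &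
      forall x : X, exists i, x \in P i].

(* maps are written on the right: (x)(f g) = ((x)f)g *)
Definition compr (f g : {ffun X -> X}) : {ffun X -> X} := [ffun x => g (f x)].

Definition inT (f : {ffun X -> X}) : Prop :=
  forall i, exists j, f @: P i \subset P j.

Definition inS (f : {ffun X -> X}) : Prop :=
  inT f /\ exists g, inT g /\ compr f g = [ffun x => x] /\ compr g f = [ffun x => x].

Definition inSigma (f : {ffun X -> X}) : Prop :=
  inT f /\ forall j, exists x, f x \in P j.

(* distinct block sizes l_1 < ... < l_r (0-indexed here: sizes`_0 < ...) *)
Definition sizes : seq nat := sort leq (undup [seq #|P i| | i <- enum 'I_n]).

(* B_i (0-indexed: uses nth 0 sizes i and sizes`_(i+1)) *)
Definition inB_i (i : nat) (f : {ffun X -> X}) : Prop :=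
  inSigma f /\
  exists j j' k k' : 'I_n,
    [/\ #|P j| = nth 0 sizes i /\ #|P j'| = nth 0 sizes i,
        #|P k| = nth 0 sizes i.+1 /\ #|P k'| = nth 0 sizes i.+1,
        (f @: P j \subset P k /\ {in P j &, injective f}),
        f @: P k' = P j' &
        forall m, m != j -> m != k' ->
          exists m', #|P m'| = #|P m| /\ f @: P m = P m' /\ {in P m &, injective f}].

Definition inB (f : {ffun X -> X}) : Prop :=
  exists i, i.+1 < size sizes /\ inB_i i f.

Definition inC_i (i : nat) (f : {ffun X -> X}) : Prop :=
  inSigma f /\
  (forall m, exists m', #|P m'| = #|P m| /\ f @: P m \subset P m') /\
  exists j, [/\ #|P j| = nth 0 sizes i, #|f @: P j| = nth 0 sizes i - 1 &
                forall m, m != j -> {in P m &, injective f}].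

Definition inC (f : {ffun X -> X}) : Prop :=
  exists i, i < size sizes /\ inC_i i f.

Definition companion (pi : {perm 'I_n}) (g : {ffun X -> X}) : Prop :=
  inSigma g /\
  forall i, [/\ g @: P i \subset P (pi i),
               #|P i| <= #|P (pi i)| -> {in P i &, injective g} &
               #|P i| >= #|P (pi i)| -> g @: P i = P (pi i)].

End Defs.

Inductive gen (X : finType) (A : {ffun X -> X} -> Prop) : {ffun X -> X} -> Prop :=
  | gen_base f : A f -> gen A f
  | gen_mul f g : gen A f -> gen A g -> gen A (compr f g).

From mathcomp Require Import all_boot all_order all_fingroup.
From mathcomp Require Import zify.
Set Implicit Arguments. Unset Strict Implicit. Unset Printing Implicit Defensive.

(* Every map sending each block into itself lies in the semigroup generated by
   S(X,P) and C(X,P): a non-injective such map h misses some point c of a block where it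
   collapses two points a, b, so h is obtained from a map with one more image
   point (send a to c instead) followed by the elementary collapse c |-> h a,
   which lies in C.  Given a companion g of fbar, f factors as h1 g h2 with h1
   and h2 block-preserving: where g collapses a block onto a smaller one, h1
   picks g-preimages of the values of f; where g embeds a block into a larger
   one, h2 maps each g x to f x. *)

Lemma gen_mono (X : finType) (A B : {ffun X -> X} -> Prop) :
  (forall h, A h -> B h) -> forall f, gen A f -> gen B f.
Proof. by move=> AB f; elim=> [h /AB|h k _ ? _ ?]; [exact: gen_base|exact: gen_mul]. Qed.

Definition collapse (X : finType) (c d : X) : {ffun X -> X} :=
  [ffun x => if x == c then d else x].

Lemma collapse_imset (X : finType) (A : {set X}) (c d : X) :
  d \in A -> c != d -> collapse c d @: A = A :\ c.
Proof.
move=> dA cd; apply/setP => y; rewrite in_setD1.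
apply/imsetP/andP => [[x xA ->]|[yc yA]]; last by exists y; rewrite // ffunE (negbTE yc).
by rewrite ffunE; case: (eqVneq x c) => [_|xc]; split; rewrite // eq_sym.
Qed.

Section Partition.
Variables (X : finType) (n : nat) (P : 'I_n -> {set X}).
Hypothesis hP : is_partition P.

Lemma partition_block_uniq x i j : x \in P i -> x \in P j -> i = j.
Proof.
case: hP => _ hd _ xi xj; apply/eqP; apply/negPn/negP => /hd /disjointFr /(_ xi).
by rewrite xj.
Qed.

Lemma partition_cover x : exists i, x \in P i.
Proof. by case: hP. Qed.

Lemma size_in_sizes i : #|P i| \in sizes P.
Proof. by rewrite /sizes mem_sort mem_undup; apply/mapP; exists i; rewrite ?mem_enum. Qed.

Definition block_preserving (h : {ffun X -> X}) := forall i x, x \in P i -> h x \in P i.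

Lemma block_preserving_imset h i : block_preserving h -> h @: P i \subset P i.
Proof. by move=> bh; apply/subsetP => _ /imsetP [x xi ->]; exact: bh. Qed.

Lemma block_preserving_inT h : block_preserving h -> inT P h.
Proof. by move=> bh i; exists i; exact: block_preserving_imset. Qed.

Lemma block_preserving_inS h : block_preserving h -> injective h -> inS P h.
Proof.
move=> bh inj; split; first exact: block_preserving_inT.
exists [ffun y => invF inj y]; split; last split.
- apply: block_preserving_inT => i y yi; rewrite ffunE.
  have [j xj] := partition_cover (invF inj y).
  by have := bh _ _ xj; rewrite f_invF => /(partition_block_uniq yi) ->.
- by apply/ffunP => x; rewrite !ffunE invF_f.
- by apply/ffunP => x; rewrite !ffunE f_invF.
Qed.

Lemma collapse_block_preserving i c d :
  c \in P i -> d \in P i -> block_preserving (collapse c d).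
Proof.
move=> ci di m x xm; rewrite ffunE; case: eqP => // xc.
by move: xm; rewrite xc => /(partition_block_uniq ci) <-.
Qed.

Lemma collapse_inC i c d : c \in P i -> d \in P i -> c != d -> inC P (collapse c d).
Proof.
move=> ci di cd; have be := collapse_block_preserving ci di.
exists (index #|P i| (sizes P)); split; first by rewrite index_mem size_in_sizes.
rewrite /inC_i nth_index ?size_in_sizes //; split; [split|split].
- exact: block_preserving_inT.
- move=> j; have [hne _ _] := hP; have /set0Pn [y yj] := hne j.
  have [yc|yc] := eqVneq y c.
    by exists c; move: yj; rewrite ffunE eqxx yc => /(partition_block_uniq ci) <-.
  by exists y; rewrite ffunE (negbTE yc).
- by move=> m; exists m; split=> //; exact: block_preserving_imset.
exists i; split=> //.
- by rewrite collapse_imset // (cardsD1 c (P i)) ci add1n subSS subn0.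
- move=> m mi x y xm ym; rewrite !ffunE.
  have notc z : z \in P m -> (z == c) = false.
    move=> zm; apply/negbTE; apply: contraNneq mi => zc.
    by apply/eqP/(partition_block_uniq zm); rewrite zc.
  by rewrite !notc.
Qed.

Lemma block_preserving_missed_point h i a b :
  block_preserving h -> a \in P i -> h a = h b -> a != b ->
  exists2 c, c \in P i & forall x, h x != c.
Proof.
move=> bh ai hab ab.
have bi : b \in P i.
  have [j bj] := partition_cover b.
  by have := bh _ _ bj; rewrite -hab => /(partition_block_uniq (bh _ _ ai)) ->.
have : h @: P i \proper P i.
  rewrite properEcard block_preserving_imset // ltn_neqAle leq_imset_card andbT.
  by apply/negP => /imset_injP hinj; move: ab; rewrite (hinj _ _ ai bi hab) eqxx.
case/properP => _ [c ci cNh]; exists c => // x; apply: contraNneq cNh => hxc.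
have [j xj] := partition_cover x.
have := bh _ _ xj; rewrite hxc => /(partition_block_uniq ci) ij.
by apply/imsetP; exists x; rewrite // ij.
Qed.

Lemma block_preserving_redirect h :
  block_preserving h -> ~~ injectiveb h ->
  exists h' i c d, [/\ block_preserving h', #|h @: setT| < #|h' @: setT|,
                       [/\ c \in P i, d \in P i & c != d] &
                       h = compr h' (collapse c d)].
Proof.
move=> bh /injectivePn [a [b ab hab]]; have [i ai] := partition_cover a.
have [c ci hNc] := block_preserving_missed_point bh ai hab ab.
set h' := [ffun x => if x == a then c else h x].
exists h', i, c, (h a); split.
- move=> m x xm; rewrite ffunE; case: eqVneq => [xa|_]; last exact: bh.
  by move: xm; rewrite xa => /(partition_block_uniq ai) <-.
- apply: proper_card; apply/properP; split.
    apply/subsetP => _ /imsetP [x _ ->]; have [->|xa] := eqVneq x a.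
      by rewrite hab; apply/imsetP; exists b; rewrite // ffunE eq_sym (negbTE ab).
    by apply/imsetP; exists x; rewrite // ffunE (negbTE xa).
  exists c; first by apply/imsetP; exists a; rewrite // ffunE eqxx.
  by apply/imsetP => -[x _ /esym/eqP]; rewrite (negbTE (hNc x)).
- by split=> //; [exact: bh | rewrite eq_sym hNc].
- apply/ffunP => x; rewrite !ffunE; have [->|xa] := eqVneq x a; first by rewrite !eqxx.
  by rewrite (negbTE (hNc x)).
Qed.

Lemma block_preserving_gen h :
  block_preserving h -> gen (fun k => inS P k \/ inC P k) h.
Proof.
move: {2}(#|X| - #|h @: setT|) (leqnn (#|X| - #|h @: setT|)) => k.
elim: k h => [|k IH] h hk bh; have [inj|ninj] := boolP (injectiveb h);
  try by apply: gen_base; left; apply: block_preserving_inS => //; apply/injectiveP.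
all: have [h' [i [c [d [bh' grow [ci di cd] ->]]]]] := block_preserving_redirect bh ninj.
- by have := max_card (h' @: setT); move: hk grow; lia.
- apply: gen_mul; first by apply: IH bh'; move: hk grow (max_card (h' @: setT)); lia.
  by apply: gen_base; right; exact: collapse_inC ci di cd.
Qed.

Definition block_of (x : X) : option 'I_n := [pick j | x \in P j].

Lemma block_ofP x i : x \in P i -> block_of x = Some i.
Proof.
move=> xi; rewrite /block_of; case: pickP => [j xj|/(_ i)]; last by rewrite xi.
by rewrite (partition_block_uniq xj xi).
Qed.

Section Companion.
Variables (pi : {perm 'I_n}) (f g : {ffun X -> X}).
Hypothesis f_blocks : forall i, f @: P i \subset P (pi i).
Hypothesis g_companion : companion P pi g.

Definition companion_pre : {ffun X -> X} :=
  [ffun x => if block_of x is Some i then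
     if #|P (pi i)| <= #|P i| then odflt x [pick x' in P i | g x' == f x] else x
   else x].

Definition companion_post : {ffun X -> X} :=
  [ffun y => if block_of y is Some k then
     if #|P ((pi^-1)%g k)| < #|P k| then
       if [pick x in P ((pi^-1)%g k) | g x == y] is Some x then f x else y
     else y
   else y].

Lemma companion_pre_block_preserving : block_preserving companion_pre.
Proof.
move=> i x xi; rewrite ffunE (block_ofP xi).
by case: leqP => _ //; case: pickP => [x' /andP [] | ].
Qed.

Let f_mem_block x i : x \in P i -> f x \in P (pi i).
Proof. by move=> xi; apply: (subsetP (f_blocks i)); apply: imset_f. Qed.

Lemma companion_post_block_preserving : block_preserving companion_post.
Proof.
move=> k y yk; rewrite ffunE (block_ofP yk).
case: ltnP => _ //; case: pickP => [x' /andP [x'i _]|] //.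
by have := f_mem_block x'i; rewrite permKV.
Qed.

Lemma companion_factorization : f = compr (compr companion_pre g) companion_post.
Proof.
have [_ hg] := g_companion.
have g_block x i : x \in P i -> g x \in P (pi i).
  by move=> xi; have [/subsetP + _ _] := hg i; apply; exact: imset_f.
apply/ffunP => x; have [i xi] := partition_cover x.
rewrite !ffunE (block_ofP xi); case: leqP => le.
- have [_ _ /(_ le) g_onto] := hg i.
  have : f x \in g @: P i by rewrite g_onto f_mem_block.
  case/imsetP => x0 x0i fx0.
  case: pickP => [x' /andP [x'i /eqP gx'] | /(_ x0)]; last by rewrite x0i -fx0 eqxx.
  by rewrite /= gx' (block_ofP (f_mem_block xi)) permK ltnNge le.
- rewrite (block_ofP (g_block _ _ xi)) permK le.
  case: pickP => [x' /andP [x'i /eqP gx'] | /(_ x)]; last by rewrite /= xi eqxx.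
  have [_ g_inj _] := hg i.
  by rewrite (g_inj (ltnW le) _ _ x'i xi gx').
Qed.
End Companion.
End Partition.

Unset Implicit Arguments.
Set Strict Implicit.
Theorem lemma4p3 (X : finType) (n : nat) (P : 'I_n -> {set X})
  (hX : 0 < #|X|)
  (hP : is_partition P)
  (hord : forall i j : 'I_n, (i <= j)%N -> #|P i| <= #|P j|)
  (f : {ffun X -> X}) (hf : inSigma P f)
  (fbar : {perm 'I_n}) (hfbar : forall i, f @: P i \subset P (fbar i))
  (hcomp : exists g, companion P fbar g /\
             gen (fun h => inS P h \/ inB P h) g) :
  gen (fun h => inS P h \/ inB P h \/ inC P h) f.
Proof.
have [g [g_companion g_gen]] := hcomp.
have SC_sub k : inS P k \/ inC P k -> inS P k \/ inB P k \/ inC P k.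
  by case; [left | right; right].
rewrite (companion_factorization hP hfbar g_companion).
apply: gen_mul; first apply: gen_mul.
- apply: gen_mono SC_sub _ (block_preserving_gen hP _).
  exact: companion_pre_block_preserving.
- by apply: gen_mono g_gen => k [] ?; [left | right; left].
- apply: gen_mono SC_sub _ (block_preserving_gen hP _).
  exact: companion_post_block_preserving.
Qed.
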